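(* Suppose an iteration of Dual KOSZ starting from potentials $\mathbf x^t$ samples a tree edge $(i,j)\in T$ with probability $P_{ij}=\frac1\tau\cdot\frac{r(i,j)}{R(C(i,j))}$, where $\tau=\sum_{(i,j)\in T}\frac{r(i,j)}{R(C(i,j))}$, producing $\mathbf x^{t+1}$. Then $$\mathcal B(\mathbf x^* )-\mathbb E[\mathcal B(\mathbf x^{t+1})]\le\Big(1-\frac1\tau\Big)\big(\mathcal B(\mathbf x^* )-\mathcal B(\mathbf x^t)\big).$$
   Context: $G=(V,E)$ is a connected undirected graph with resistances $r(e)>0$; $\mathbf b\in\mathbb R^V$ with $\sum_ib(i)=0$; $\mathbf L=\sum_{ij\in E}\frac1{r(i,j)}(\mathbf e_i-\mathbf e_j)(\mathbf e_i-\mathbf e_j)^\top$, $\mathcal B(\mathbf x)=\mathbf b^\top\mathbf x-\frac12\mathbf x^\top\mathbf L\mathbf x$, and $\mathbf x^*$ maximizes $\mathcal B$. $T$ is a spanning tree, rooted, with tree edges directed toward the root; for a tree edge $(i,j)$, $C(i,j)$ is the vertex set of the component of $T-ij$ containing $i$. For $C\subset V$: $R(C)=(\sum_{e\in\delta(C)}1/r(e))^{-1}$, $b(C)=\sum_{v\in C}b(v)$, $f(C)=\sum_{kl\in E,k\in C,l\notin C}\frac{x^t(k)-x^t(l)}{r(k,l)}$. One iteration of Dual KOSZ with sampled edge $(i,j)$: with $C=C(i,j)$ and $\Delta=(b(C)-f(C))R(C)$, set $\mathbf x^{t+1}=\mathbf x^t+\Delta\mathbbm 1_C$. The expectation is over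 the sampled edge. *)

From HB Require Import structures.
From mathcomp Require Import all_boot all_order all_algebra.
Set Implicit Arguments. Unset Strict Implicit. Unset Printing Implicit Defensive.
Import Order.TTheory GRing.Theory Num.Theory.
Local Open Scope ring_scope.

Section KOSZ.
Variables (R : realFieldType) (V : finType).

(* Graph G = (V, E): E is a symmetric irreflexive relation; r v w is the
   resistance of edge vw (only meaningful when E v w). *)

(* (L x)(v) = sum_{u : vu in E} (x v - x u) / r(v,u): the Laplacian
   L = sum_{ij in E} 1/r(i,j) (e_i - e_j)(e_i - e_j)^T applied to x. *)
Definition lap (E : rel V) (r : V -> V -> R) (x : V -> R) (v : V) : R :=
  \sum_(u | E v u) (x v - x u) / r v u.

Definition Bfun (E : rel V) (r : V -> V -> R) (b : V -> R) (x : V -> R) : R :=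
  \sum_v b v * x v - 2^-1 * \sum_v x v * lap E r x v.

(* A rooted spanning tree of G given by a root and a parent map:
   the tree edges are (v, par v) for v <> root, directed toward the root. *)
Definition rooted_spanning_tree (E : rel V) (root : V) (par : V -> V) : Prop :=
  par root = root /\
  (forall v, v != root -> E v (par v)) /\
  (forall v, exists k, iter k par v = root).

Definition tree_adj (root : V) (par : V -> V) : rel V :=
  fun a c => ((a != root) && (c == par a)) || ((c != root) && (a == par c)).

Definition tree_adj_minus (root : V) (par : V -> V) (i j : V) : rel V :=
  fun a c => tree_adj root par a c &&
             ~~ (((a == i) && (c == j)) || ((a == j) && (c == i))).

Definition Ccomp (root : V) (par : V -> V) (i j : V) : {set V} :=
  [set u | connect (tree_adj_minus root par i j) i u].

Definition Rcut (E : rel V) (r : V -> V -> R) (C : {set V}) : R :=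
  (\sum_(k in C) \sum_(l | (l \notin C) && E k l) (r k l)^-1)^-1.

Definition bset (b : V -> R) (C : {set V}) : R := \sum_(v in C) b v.

Definition fflow (E : rel V) (r : V -> V -> R) (x : V -> R) (C : {set V}) : R :=
  \sum_(k in C) \sum_(l | (l \notin C) && E k l) (x k - x l) / r k l.

Definition kosz_step (E : rel V) (r : V -> V -> R) (b : V -> R)
    (root : V) (par : V -> V) (x : V -> R) (i j : V) : V -> R :=
  let C := Ccomp root par i j in
  let Delta := (bset b C - fflow E r x C) * Rcut E r C in
  fun v => x v + (if v \in C then Delta else 0).

Definition tau (E : rel V) (r : V -> V -> R) (root : V) (par : V -> V) : R :=
  \sum_(v | v != root) r v (par v) / Rcut E r (Ccomp root par v (par v)).

Definition Pedge (E : rel V) (r : V -> V -> R) (root : V) (par : V -> V)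
    (v : V) : R :=
  (tau E r root par)^-1 * (r v (par v) / Rcut E r (Ccomp root par v (par v))).

End KOSZ.

From HB Require Import structures.
From mathcomp Require Import all_boot all_order all_algebra.
From mathcomp Require Import ring lra.
Set Implicit Arguments. Unset Strict Implicit. Unset Printing Implicit Defensive.
Import Order.TTheory GRing.Theory Num.Theory.
Local Open Scope ring_scope.

(* For a tree edge e = (v, par v) write g_e = b(C_e) - f(C_e).  The step on e
   raises B by exactly g_e^2 R(C_e) / 2, so with the sampling probabilities
   P_e = r(e) / (tau R(C_e)) the expected gain is (1/tau) sum_e r(e) g_e^2 / 2.
   On the other hand, for any y, with z = y - x and G = b - L x, the quadratic B
   satisfies B(y) - B(x) = z.G - z^T L z / 2.  As G sums to zero, summing it
   over subtrees rewrites z.G as sum_e g_e (z_v - z_(par v)), while z^T L z is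
   at least its tree part sum_e (z_v - z_(par v))^2 / r(e).  Completing the
   square edge by edge gives B(y) - B(x) <= sum_e r(e) g_e^2 / 2, which is tau
   times the expected gain. *)

Section LaplacianForm.
Variables (R : realFieldType) (V : finType) (E : rel V) (r : V -> V -> R).
Hypotheses (symE : symmetric E) (rsym : forall u v, r u v = r v u).

Lemma sum_symrel_swap (P : rel V) (F : V -> V -> R) : symmetric P ->
  \sum_v \sum_(u | P v u) F v u = \sum_v \sum_(u | P v u) F u v.
Proof.
move=> symP; under eq_bigr do rewrite big_mkcond.
rewrite exchange_big /=; apply: eq_bigr => v _; rewrite [RHS]big_mkcond.
by apply: eq_bigr => u _; rewrite symP.
Qed.

Lemma sum_symrel_antisym (P : rel V) (F : V -> V -> R) : symmetric P ->
  (forall u v, F u v = - F v u) -> \sum_v \sum_(u | P v u) F v u = 0.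
Proof.
move=> symP antiF; set S := (X in X = 0).
have SN : S = - S.
  rewrite {1}/S sum_symrel_swap // -sumrN; apply: eq_bigr => v _.
  by rewrite -sumrN; apply: eq_bigr => u _; rewrite antiF.
lra.
Qed.

Lemma flow_antisym x u v : (x u - x v) / r u v = - ((x v - x u) / r v u).
Proof. by rewrite rsym -mulNr opprB. Qed.

Lemma sum_lap_eq0 x : \sum_v lap E r x v = 0.
Proof. exact: sum_symrel_antisym symE (flow_antisym x). Qed.

(* The flow along edges inside C cancels, leaving the flow out of C. *)
Lemma sum_lap_in x (C : {set V}) : \sum_(v in C) lap E r x v = fflow E r x C.
Proof.
rewrite /fflow /lap.
under eq_bigr do rewrite (bigID (fun u => u \in C)) /=.
rewrite big_split /=.
have -> : \sum_(v in C) \sum_(u | E v u && (u \in C)) (x v - x u) / r v u = 0.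
  rewrite -[RHS](@sum_symrel_antisym (fun v u => [&& v \in C, u \in C & E v u])
                   _ _ (flow_antisym x)); last by move=> u v; rewrite symE andbCA.
  rewrite big_mkcond; apply: eq_bigr => v _; case: (v \in C) => /=.
    by apply: eq_bigl => u; rewrite andbC.
  by rewrite big_pred0.
by rewrite add0r; apply: eq_bigr => v _; apply: eq_bigl => u; rewrite andbC.
Qed.

Definition lapform (x y : V -> R) := \sum_v x v * lap E r y v.

(* Each edge is counted twice, once in each orientation. *)
Definition edge_form (x y : V -> R) :=
  \sum_v \sum_(u | E v u) (x v - x u) * (y v - y u) / r v u.

Lemma lapformE x y : lapform x y = 2^-1 * edge_form x y.
Proof.
have L1 : lapform x y = \sum_v \sum_(u | E v u) x v * ((y v - y u) / r v u).
  by apply: eq_bigr => v _; rewrite /lap mulr_sumr.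
have L2 : lapform x y = \sum_v \sum_(u | E v u) x u * ((y u - y v) / r u v).
  by rewrite L1 sum_symrel_swap.
have L12 : lapform x y + lapform x y = edge_form x y.
  rewrite {1}L1 L2 -big_split; apply: eq_bigr => v _.
  by rewrite -big_split; apply: eq_bigr => u _; rewrite (rsym u v) /=; ring.
rewrite -L12; lra.
Qed.

Lemma lapformC x y : lapform x y = lapform y x.
Proof.
rewrite !lapformE; congr (_ * _); apply: eq_bigr => v _; apply: eq_bigr => u _.
by rewrite (mulrC (x v - x u)).
Qed.

Lemma lapD x y v : lap E r (fun w => x w + y w) v = lap E r x v + lap E r y v.
Proof. by rewrite /lap -big_split; apply: eq_bigr => u _ /=; ring. Qed.

Lemma eq_Bfun b x y : x =1 y -> Bfun E r b x = Bfun E r b y.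
Proof.
move=> xy; have xyL v : lap E r x v = lap E r y v.
  by apply: eq_bigr => u _; rewrite !xy.
by rewrite /Bfun; congr (_ - _ * _); apply: eq_bigr => v _; rewrite xy ?xyL.
Qed.

Lemma BfunD b x y : Bfun E r b (fun v => x v + y v) =
  Bfun E r b x + \sum_v b v * y v - lapform y x - 2^-1 * lapform y y.
Proof.
have quad : \sum_v (x v + y v) * lap E r (fun w => x w + y w) v =
            lapform x x + lapform x y + lapform y x + lapform y y.
  by rewrite /lapform -!big_split; apply: eq_bigr => v _ /=; rewrite lapD; ring.
have lin : \sum_v b v * (x v + y v) = \sum_v b v * x v + \sum_v b v * y v.
  by rewrite -big_split; apply: eq_bigr => v _ /=; ring.
rewrite /Bfun quad lin (lapformC x y) -/(lapform x x); lra.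
Qed.

(* Delta = (b(C) - f(C)) R(C) maximizes the concave quadratic
   Delta |-> B(x + Delta 1_C), whose leading coefficient is -1/(2 R(C)). *)
Lemma Bfun_optimal_shift b x (C : {set V}) :
  Bfun E r b (fun v => x v + (if v \in C then
        (bset b C - fflow E r x C) * Rcut E r C else 0)) =
  Bfun E r b x + (bset b C - fflow E r x C) ^+ 2 * Rcut E r C / 2.
Proof.
set g := bset b C - fflow E r x C.
set s := \sum_(k in C) \sum_(l | (l \notin C) && E k l) (r k l)^-1.
have Rs : Rcut E r C = s^-1 by [].
set D := g * Rcut E r C; set y := fun v => if v \in C then D else 0.
have sum_y F : \sum_v y v * F v = D * \sum_(v in C) F v.
  rewrite mulr_sumr [RHS]big_mkcond; apply: eq_bigr => v _.
  by rewrite /y; case: (v \in C); rewrite ?mul0r.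
have b_y : \sum_v b v * y v = D * bset b C.
  by rewrite -sum_y; apply: eq_bigr => v _; rewrite mulrC.
have Lyx : lapform y x = D * fflow E r x C by rewrite /lapform sum_y sum_lap_in.
have Lyy : lapform y y = D * (D * s).
  rewrite /lapform sum_y sum_lap_in /fflow /s; congr (_ * _).
  rewrite mulr_sumr; apply: eq_bigr => k kC.
  rewrite mulr_sumr; apply: eq_bigr => l /andP [lC _].
  by rewrite /y kC (negbTE lC) subr0.
rewrite (BfunD b x y) b_y Lyx Lyy /D Rs.
have [->|s0] := eqVneq s 0; first by rewrite invr0; ring.
by rewrite /g; field.
Qed.

End LaplacianForm.

Section RootedTree.
Variables (R : realFieldType) (V : finType) (E : rel V) (r : V -> V -> R).
Variables (b : V -> R) (root : V) (par : V -> V).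
Hypotheses (symE : symmetric E) (rsym : forall u v, r u v = r v u).
Hypothesis rpos : forall u v, E u v -> 0 < r u v.
Hypothesis b0 : \sum_v b v = 0.
Hypothesis par_root : par root = root.
Hypothesis par_edge : forall v, v != root -> E v (par v).
Hypothesis par_reach : forall v, exists k, iter k par v = root.

Local Notation C v := (Ccomp root par v (par v)).

Definition descendant (u v : V) := exists k, iter k par u = v.

Lemma iter_par_root k : iter k par root = root.
Proof. by elim: k => //= k ->. Qed.

Lemma iter_par_cycle u k : iter k.+1 par u = u -> u = root.
Proof.
move=> cyc; have [n un] := par_reach u.
have cycm m : iter (m * k.+1) par u = u.
  by elim: m => [|m IH] //; rewrite mulSn iterD IH cyc.
have := cycm n; have -> : (n * k.+1 = (n * k.+1 - n) + n)%N.
  by rewrite subnK // leq_pmulr.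
by rewrite iterD un iter_par_root => ->.
Qed.

Lemma par_par_neq v : v != root -> par (par v) != v.
Proof.
move=> vr; apply: contraNneq vr => ppv; apply/eqP.
by apply: (@iter_par_cycle v 1); rewrite /= ppv.
Qed.

Lemma tree_adj_minus_descendant v a c : v != root -> descendant a v ->
  tree_adj_minus root par v (par v) a c -> descendant c v.
Proof.
move=> vr [k ak] /andP [/orP [/andP [ar /eqP ->] | /andP [cr /eqP ca]] notvpv].
- case: k ak => [|k] ak; last by exists k; rewrite -iterSr.
  by move: notvpv; rewrite /= in ak; rewrite ak !eqxx.
- by exists k.+1; rewrite iterSr -ca.
Qed.

Lemma path_descendant v a p : v != root -> descendant a v ->
  path (tree_adj_minus root par v (par v)) a p -> descendant (last a p) v.
Proof.
move=> vr; elim: p a => [|c p IH] a //= av /andP [ac cp].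
exact: IH (tree_adj_minus_descendant vr av ac) cp.
Qed.

Lemma mem_Ccomp v u : v != root -> (u \in C v) <-> descendant u v.
Proof.
move=> vr; rewrite inE; split.
- by case/connectP => p vp ->; apply: path_descendant vp => //; exists 0%N.
- case=> k; elim: k u => [|k IH] u; first by move=> /= ->; exact: connect0.
  move=> uv; have ur : u != root.
    by apply: contraNneq vr => ur; rewrite -uv ur iter_par_root.
  rewrite iterSr in uv; apply: connect_trans (IH _ uv) (connect1 _).
  apply/andP; split; first by rewrite /tree_adj ur eqxx orbT.
  apply/negP; case/orP => /andP [/eqP pu_v /eqP u_v].
  + by move: (par_par_neq vr); rewrite -u_v pu_v eqxx.
  + by move: uv vr; rewrite u_v -iterSr => /iter_par_cycle ->; rewrite eqxx.
Qed.

Lemma par_notin_Ccomp v : v != root -> par v \notin C v.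
Proof.
move=> vr; apply/negP => /(mem_Ccomp _ vr) [k]; rewrite -iterSr.
by move/iter_par_cycle => vroot; rewrite vroot eqxx in vr.
Qed.

Lemma root_notin_Ccomp v : v != root -> root \notin C v.
Proof.
move=> vr; apply/negP => /(mem_Ccomp _ vr) [k]; rewrite iter_par_root.
by move=> rv; rewrite rv eqxx in vr.
Qed.

Lemma Ccomp_par v u : v != root -> v != u -> (u \in C v) = (par u \in C v).
Proof.
move=> vr vu; apply/idP/idP => /(mem_Ccomp _ vr) [k ukv]; apply/(mem_Ccomp _ vr).
- case: k ukv => [|k] ukv; first by rewrite /= in ukv; rewrite ukv eqxx in vu.
  by exists k; rewrite -iterSr.
- by exists k.+1; rewrite iterSr.
Qed.

Lemma Rcut_gt0 v : v != root -> 0 < Rcut E r (C v).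
Proof.
move=> vr; rewrite /Rcut invr_gt0 (bigD1 v) /=; last by rewrite inE connect0.
rewrite (bigD1 (par v)) /=; last by rewrite par_notin_Ccomp // par_edge.
have inv_r_ge0 k l : E k l -> 0 <= (r k l)^-1 by move=> kl; rewrite invr_ge0 ltW ?rpos.
rewrite -addrA ltr_pwDl ?invr_gt0 ?rpos ?par_edge // addr_ge0 //.
  by apply: sumr_ge0 => l /andP [/andP [_ vl] _]; exact: inv_r_ge0.
by apply: sumr_ge0 => k _; apply: sumr_ge0 => l /andP [_ kl]; exact: inv_r_ge0.
Qed.

Lemma sum_Ccomp_telescope (z : V -> R) u :
  \sum_(v | (v != root) && (u \in C v)) (z v - z (par v)) = z u - z root.
Proof.
have at_root : \sum_(v | (v != root) && (root \in C v)) (z v - z (par v)) = 0.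
  apply: big_pred0 => v; case: (boolP (v != root)) => //= vr.
  exact/negbTE/root_notin_Ccomp.
have [n] := par_reach u; elim: n u => [|n IH] u un.
  by move: un => /= ->; rewrite at_root subrr.
have [-> | ur] := eqVneq u root; first by rewrite at_root subrr.
rewrite (bigD1 u) /=; last by rewrite ur; apply/mem_Ccomp => //; exists 0%N.
rewrite (eq_bigl (fun v => (v != root) && (par u \in C v))); last first.
  move=> v; case: (boolP (v != root)) => //= vr.
  have [->|vu] := eqVneq v u; first by rewrite (negbTE (par_notin_Ccomp ur)) andbF.
  by rewrite andbT Ccomp_par.
by rewrite IH -?iterSr // addrA subrK.
Qed.

Lemma sum_mul_subtree (z G : V -> R) : \sum_v G v = 0 ->
  \sum_v z v * G v =
  \sum_(v | v != root) (\sum_(u in C v) G u) * (z v - z (par v)).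
Proof.
move=> G0; symmetry; under eq_bigr do rewrite mulr_suml.
rewrite (exchange_big_dep predT) //=.
under eq_bigr do rewrite -mulr_sumr sum_Ccomp_telescope.
under eq_bigr do rewrite mulrBr.
rewrite sumrB -mulr_suml G0 mul0r subr0.
by apply: eq_bigr => u _; rewrite mulrC.
Qed.

Lemma tree_adj_edge a c : tree_adj root par a c -> E a c.
Proof.
by case/orP => /andP [ar /eqP ->]; last rewrite symE; exact: par_edge.
Qed.

Lemma sum_tree_adj (w : V -> V -> R) :
  \sum_v \sum_(u | tree_adj root par v u) w v u =
  \sum_(v | v != root) (w v (par v) + w (par v) v).
Proof.
have split_adj v : \sum_(u | tree_adj root par v u) w v u =
    \sum_(u | (v != root) && (u == par v)) w v u +
    \sum_(u | (u != root) && (v == par u)) w v u.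
  rewrite (bigID (fun u => (v != root) && (u == par v))) /=.
  congr (_ + _); apply: eq_bigl => u; rewrite /tree_adj.
    by case: (v != root) (u == par v) => [] [] //=; rewrite andbF.
  case: (boolP (v != root)) => /= [vr|_]; last by rewrite andbT.
  case: eqP => [->|_] /=; last by rewrite andbT.
  by rewrite (eq_sym v) (negbTE (par_par_neq vr)) andbF.
rewrite (eq_bigr _ (fun v _ => split_adj v)) big_split big_split /=; congr (_ + _).
  rewrite [RHS]big_mkcond; apply: eq_bigr => v _.
  by case: (v != root) => /=; rewrite ?big_pred1_eq ?big_pred0.
rewrite (exchange_big_dep (fun u => u != root)) /=; last by move=> v u _ /andP [].
apply: eq_bigr => u ur; rewrite (big_pred1 (par u)) // => v /=.
by rewrite ur eq_sym.
Qed.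

Lemma edge_form_tree_le (z : V -> R) :
  2 * \sum_(v | v != root) (z v - z (par v)) ^+ 2 / r v (par v) <= edge_form E r z z.
Proof.
set w := fun v u => (z v - z u) ^+ 2 / r v u.
have -> : edge_form E r z z = \sum_v \sum_(u | E v u) w v u.
  by apply: eq_bigr => v _; apply: eq_bigr => u _; rewrite /w expr2.
have -> : 2 * \sum_(v | v != root) w v (par v) =
          \sum_v \sum_(u | tree_adj root par v u) w v u.
  rewrite sum_tree_adj mulr_natl mulr2n -big_split; apply: eq_bigr => v _.
  by rewrite /w rsym -opprB sqrrN.
apply: ler_sum => v _; rewrite [X in _ <= X](bigID (tree_adj root par v)) /=.
rewrite (eq_bigl (tree_adj root par v)); last first.
  by move=> u; apply/andP/idP => [[]|uv] //; split=> //; exact: tree_adj_edge.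
rewrite lerDl sumr_ge0 // => u /andP [vu _].
by rewrite divr_ge0 ?sqr_ge0 // ltW ?rpos.
Qed.

Lemma tree_gap (z G : V -> R) : \sum_v G v = 0 ->
  \sum_v z v * G v - 2^-1 * lapform E r z z <=
  2^-1 * \sum_(v | v != root) r v (par v) * (\sum_(u in C v) G u) ^+ 2.
Proof.
move=> G0; rewrite sum_mul_subtree // lapformE //.
have young (g d rr : R) : 0 < rr ->
    g * d - 2^-1 * (d ^+ 2 / rr) <= 2^-1 * (rr * g ^+ 2).
  move=> rr0; rewrite -subr_ge0.
  have -> : 2^-1 * (rr * g ^+ 2) - (g * d - 2^-1 * (d ^+ 2 / rr)) =
            (rr * g - d) ^+ 2 / rr / 2 by field; rewrite lt0r_neq0.
  by rewrite !divr_ge0 ?sqr_ge0 ?ltW.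
have tree_part := edge_form_tree_le z.
have edgewise : \sum_(v | v != root) (\sum_(u in C v) G u) * (z v - z (par v)) -
       2^-1 * \sum_(v | v != root) (z v - z (par v)) ^+ 2 / r v (par v) <=
       2^-1 * \sum_(v | v != root) r v (par v) * (\sum_(u in C v) G u) ^+ 2.
  by rewrite !mulr_sumr -sumrB; apply: ler_sum => v vr; rewrite young ?rpos ?par_edge.
lra.
Qed.

Definition cut_residual (x : V -> R) (v : V) := bset b (C v) - fflow E r x (C v).

Definition residual_energy (x : V -> R) :=
  \sum_(v | v != root) r v (par v) * cut_residual x v ^+ 2.

Lemma Bfun_gap_le x y :
  Bfun E r b y - Bfun E r b x <= 2^-1 * residual_energy x.
Proof.
set z := fun v => y v - x v; set G := fun v => b v - lap E r x v.
rewrite (@eq_Bfun _ _ E r b y (fun v => x v + z v)); last first.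
  by move=> v; rewrite /z addrC subrK.
rewrite BfunD //.
have G0 : \sum_v G v = 0 by rewrite sumrB b0 sum_lap_eq0 // subrr.
have zG : \sum_v b v * z v - lapform E r z x = \sum_v z v * G v.
  by rewrite /lapform -sumrB; apply: eq_bigr => v _; rewrite /G; ring.
have GC : \sum_(v | v != root) r v (par v) * (\sum_(u in C v) G u) ^+ 2 =
          residual_energy x.
  by apply: eq_bigr => v _; rewrite sumrB sum_lap_in.
have := tree_gap z G0; rewrite GC -zG; lra.
Qed.

Lemma tau_gt0 v0 : v0 != root -> 0 < tau E r root par.
Proof.
have w_gt0 v : v != root -> 0 < r v (par v) / Rcut E r (C v).
  by move=> vr; rewrite divr_gt0 ?rpos ?par_edge ?Rcut_gt0.
move=> v0r; rewrite /tau (bigD1 v0) //= ltr_pwDl ?w_gt0 // sumr_ge0 // => v.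
by case/andP => vr _; rewrite ltW ?w_gt0.
Qed.

Lemma expected_Bfun_kosz_step x : 0 < tau E r root par ->
  \sum_(v | v != root)
     Pedge E r root par v * Bfun E r b (kosz_step E r b root par x v (par v)) =
  Bfun E r b x + (tau E r root par)^-1 * (2^-1 * residual_energy x).
Proof.
set t := tau E r root par => t0.
have step v : v != root ->
    Pedge E r root par v * Bfun E r b (kosz_step E r b root par x v (par v)) =
    Bfun E r b x * (t^-1 * (r v (par v) / Rcut E r (C v))) +
    t^-1 * (2^-1 * (r v (par v) * cut_residual x v ^+ 2)).
  move=> vr; rewrite /Pedge /kosz_step Bfun_optimal_shift // -/t /cut_residual.
  by field; rewrite !lt0r_neq0 ?Rcut_gt0.
rewrite (eq_bigr _ step) big_split /= -!mulr_sumr.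
by rewrite -/(tau E r root par) -/t mulVf ?lt0r_neq0 ?mulr1.
Qed.

Lemma Bfun_root_only x : (forall v, v = root) -> Bfun E r b x = 0.
Proof.
move=> all_root; have x_const v : x v = x root by rewrite (all_root v).
have lap0 v : lap E r x v = 0.
  by apply: big1 => u _; rewrite !x_const subrr mul0r.
rewrite /Bfun (eq_bigr (fun v => b v * x root)) => [|v _]; last by rewrite x_const.
by rewrite -mulr_suml b0 mul0r big1 ?mulr0 ?subrr // => v _; rewrite lap0 mulr0.
Qed.

End RootedTree.

(* The gap bound holds for every y. *)
Theorem mainTheorem12 (R : realFieldType) (V : finType)
  (E : rel V) (r : V -> V -> R) (b : V -> R) (xstar x : V -> R)
  (root : V) (par : V -> V) :
  symmetric E -> irreflexive E ->
  (forall u v, connect E u v) ->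
  (forall u v, E u v -> 0 < r u v) ->
  (forall u v, r u v = r v u) ->
  \sum_v b v = 0 ->
  (forall y, Bfun E r b y <= Bfun E r b xstar) ->
  rooted_spanning_tree E root par ->
  Bfun E r b xstar -
    \sum_(v | v != root)
       Pedge E r root par v * Bfun E r b (kosz_step E r b root par x v (par v))
  <= (1 - (tau E r root par)^-1) * (Bfun E r b xstar - Bfun E r b x).
Proof.
move=> symE _ _ rpos rsym b0 _ [par_root [par_edge par_reach]].
have gap := Bfun_gap_le symE rsym rpos b0 par_root par_edge par_reach x xstar.
case: (pickP (fun v => v != root)) => [v0 v0r | only_root].
- have tau0 := tau_gt0 rpos par_root par_edge par_reach v0r.
  rewrite (expected_Bfun_kosz_step b symE rsym rpos par_root par_edge par_reach) //.
  have inv_tau_ge0 : 0 <= (tau E r root par)^-1 by rewrite invr_ge0 ltW.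
  have := ler_wpM2l inv_tau_ge0 gap; lra.
- have all_root v : v = root by apply/eqP/negbFE/only_root.
  rewrite big_pred0 // /tau big_pred0 // invr0 (Bfun_root_only E r b0 x all_root).
  lra.
Qed.
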